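(* Let $\phi=(Q,\Sigma,\delta^\phi,q_0,Q\setminus\{q_{err}\})$ be a finite-state property and $R\subseteq\Sigma^*\times\Gamma$ a loss model. Define the NFA $\psi^*=(Q,\Gamma,\delta^{\psi^*},q_0,Q\setminus\{q_{err}\})$ by $$\delta^{\psi^*}(q,\gamma)=\delta^\phi(q,R^{-1}(\gamma))=\{\delta^\phi(q,s)\mid s\in\Sigma^*,\ sR\gamma\}\quad(q\in Q,\ \gamma\in\Gamma).$$ Then $\psi^*$ satisfies the superposed monitor condition and $L(\psi^* )=L_{opt}(\phi,R)$, where $L_{opt}(\phi,R)=\{y\in\Gamma^*\mid \mathcal{F}_R^{-1}(y)\cap L(\phi)\neq\emptyset\}$.
   Context: A finite-state property is a minimum-state DFA $\phi=(Q,\Sigma,\delta^\phi,q_0,Q\setminus\{q_{err}\})$ with designated trap error state $q_{err}$; $L(\phi)=\{x\mid\delta^\phi(q_0,x)\neq q_{err}\}$. $\delta^\phi$ is lifted to sets of states and sets of strings. A loss model is $R\subseteq\Sigma^*\times\Gamma$ with $\Gamma$ finite, and $R^{-1}(\gamma)=\{s\mid sR\gamma\}$. A filter under $R$ is determined by pairs $(s_1,\gamma_1),\dots,(s_m,\gamma_m)$ with $s_iR\gamma_i$ and a string $r\in\Sigma^*$; it maps each prefix $x$ of $s_1\cdots s_m r$ to $\gamma_1\cdots\gamma_j$ with $j$ maximal such that $s_1\cdots s_j$ is a prefix of $x$. $x\in\Sigma^*$ is a completion of $y\in\Gamma^*$ if some filter $f$ under $R$ has $f(x)=y$ and $f(x')\neq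 y$ for every proper prefix $x'$ of $x$; $\mathcal{F}_R^{-1}(y)$ is the set of completions. For an NFA $\psi=(Q,\Gamma,\delta^\psi,q_0,Q\setminus\{q_{err}\})$, $L(\psi)=\{y\mid\delta^\psi(\{q_0\},y)\cap(Q\setminus\{q_{err}\})\neq\emptyset\}$; it satisfies the superposed monitor condition if $\delta^\phi(q_0,x)\in\delta^\psi(\{q_0\},y)$ for all $y\in\Gamma^*$ and all $x\in\mathcal{F}_R^{-1}(y)$. *)

From mathcomp Require Import all_boot.
Set Implicit Arguments. Unset Strict Implicit. Unset Printing Implicit Defensive.

Section Defs.
Variables (Q Sigma Gamma : finType).

Definition dfa_run (delta : Q -> Sigma -> Q) (q : Q) (x : seq Sigma) : Q :=
  foldl delta q x.

Definition dfa_lang (delta : Q -> Sigma -> Q) (q0 qerr : Q) (x : seq Sigma) : Prop :=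
  dfa_run delta q0 x <> qerr.

(* Minimality: every state is reachable and
   any two distinct states are distinguishable. *)
Definition finite_state_property (delta : Q -> Sigma -> Q) (q0 qerr : Q) : Prop :=
  [/\ (forall a, delta qerr a = qerr),
      (forall q, exists x, dfa_run delta q0 x = q) &
      (forall p q, p <> q -> exists w,
          ~ ((dfa_run delta p w <> qerr) <-> (dfa_run delta q w <> qerr)))].

Definition loss_model := seq Sigma -> Gamma -> Prop.

(* The filter determined by pairs p = [(s_1,g_1);...;(s_m,g_m)] and string r:
   filter_maps p r x y  <->  x is a prefix of s_1...s_m r and f(x) = y, i.e.
   y = g_1...g_j with j maximal such that s_1...s_j is a prefix of x. *)
Definition filter_maps (p : seq (seq Sigma * Gamma)) (r : seq Sigma)
    (x : seq Sigma) (y : seq Gamma) : Prop :=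
  prefix x (flatten (map fst p) ++ r) /\
  exists j, [/\ j <= size p,
     prefix (flatten (map fst (take j p))) x,
     (forall k, j < k <= size p -> ~~ prefix (flatten (map fst (take k p))) x) &
     y = map snd (take j p)].

Definition filter_under (R : loss_model) (p : seq (seq Sigma * Gamma)) : Prop :=
  forall sg, sg \in p -> R sg.1 sg.2.

(* x is a completion of y, i.e. x ∈ F_R^{-1}(y). *)
Definition completion (R : loss_model) (x : seq Sigma) (y : seq Gamma) : Prop :=
  exists (p : seq (seq Sigma * Gamma)) (r : seq Sigma),
    [/\ filter_under R p,
        filter_maps p r x y &
        forall x', prefix x' x -> size x' < size x -> ~ filter_maps p r x' y].

(* NFA over Γ with states Q: transition relation delta q g q' <-> q' ∈ delta(q,g). *)
Definition nfa_trans := Q -> Gamma -> Q -> Prop.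

Fixpoint nfa_run (d : nfa_trans) (S : Q -> Prop) (y : seq Gamma) : Q -> Prop :=
  match y with
  | [::] => S
  | g :: y' => nfa_run d (fun q' => exists2 q, S q & d q g q') y'
  end.

Definition nfa_lang (d : nfa_trans) (q0 qerr : Q) (y : seq Gamma) : Prop :=
  exists2 q, nfa_run d (fun q => q = q0) y q & q <> qerr.

Definition superposed_monitor (delta : Q -> Sigma -> Q) (q0 : Q)
    (R : loss_model) (d : nfa_trans) : Prop :=
  forall (y : seq Gamma) (x : seq Sigma), completion R x y ->
    nfa_run d (fun q => q = q0) y (dfa_run delta q0 x).

Definition psi_star (delta : Q -> Sigma -> Q) (R : loss_model) : nfa_trans :=
  fun q g q' => exists2 s, R s g & q' = dfa_run delta q s.

Definition L_opt (delta : Q -> Sigma -> Q) (q0 qerr : Q) (R : loss_model)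
    (y : seq Gamma) : Prop :=
  exists2 x, completion R x y & dfa_lang delta q0 qerr x.

End Defs.

From mathcomp Require Import all_boot.
Set Implicit Arguments. Unset Strict Implicit. Unset Printing Implicit Defensive.

(* The argument rests on two characterisations, each with two directions.
   - Runs of psi*: a state q' is reachable in psi* from a set S on input y iff
     q' = delta^phi(q, s_1 ... s_m) for some q in S and some R-related pairs
     (s_1, g_1), ..., (s_m, g_m) whose labels spell y  (lemmas [psi_star_run]
     and [psi_star_run_inv]).
   - Completions: x is a completion of y iff x = s_1 ... s_m for such a list of
     pairs labelled by y ([completion_concat] and [concat_completion]).  A
     completion is exactly the concatenation of the consumed pairs because it
     is minimal; conversely, the filter built from the pairs with empty
     remainder r maps their concatenation, and no shorter prefix, onto y. *)

Section LossyWords.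
Variables (Sigma Gamma : finType) (R : loss_model Sigma Gamma).

Definition concat_input (p : seq (seq Sigma * Gamma)) : seq Sigma :=
  flatten (map fst p).

Lemma filter_full_output_prefix p r x :
  filter_maps p r x (map snd p) -> prefix (concat_input p) x.
Proof.
move=> [_ [j [le_j_p pre_x _ out_j]]].
have j_p : j = size p.
  move: (congr1 size out_j); rewrite !size_map size_take_min.
  by move/minn_idPl: le_j_p => ->.
by rewrite j_p take_size in pre_x.
Qed.

Lemma filter_maps_concat p : filter_maps p [::] (concat_input p) (map snd p).
Proof.
split; first by rewrite cats0 prefix_refl.
exists (size p); split => //; first by rewrite take_size prefix_refl.
- by move=> k /andP [lt_pk le_kp]; move: (leq_trans lt_pk le_kp); rewrite ltnn.
- by rewrite take_size.
Qed.

Lemma concat_completion p :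
  filter_under R p -> completion R (concat_input p) (map snd p).
Proof.
move=> Rp; exists p, [::]; split => //; first exact: filter_maps_concat.
move=> x' _ lt_x' /filter_full_output_prefix /size_prefix.
by rewrite leqNgt lt_x'.
Qed.

(* Conversely, a completion is the concatenation of the pairs it consumes:
   the consumed prefix is itself mapped onto y, so by minimality it is all
   of x. *)
Lemma completion_concat x y : completion R x y ->
  exists2 p, filter_under R p & map snd p = y /\ x = concat_input p.
Proof.
move=> [p [r [Rp [pre_x [j [le_j_p pre_j max_j out_j]]] min_x]]].
exists (take j p); first by move=> sg /mem_take; apply: Rp.
split => //.
set a := concat_input (take j p).
have map_a : filter_maps p r a y.
  split; first exact: prefix_trans pre_j pre_x.
  exists j; split => //; first exact: prefix_refl.
  move=> k lt_jk; apply/negP => pre_ka.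
  by move: (max_j k lt_jk); rewrite (prefix_trans pre_ka pre_j).
have size_a : size a = size x.
  apply/eqP; rewrite eqn_leq size_prefix //= leqNgt.
  by apply/negP => lt_ax; exact: (min_x a pre_j lt_ax map_a).
by move: pre_j; rewrite prefixE size_a take_size => /eqP.
Qed.

End LossyWords.

Section PsiStarRuns.
Variables (Q Sigma Gamma : finType) (delta : Q -> Sigma -> Q).
Variable R : loss_model Sigma Gamma.

Lemma psi_star_run (S : Q -> Prop) (p : seq (seq Sigma * Gamma)) q :
  S q -> filter_under R p ->
  nfa_run (psi_star delta R) S (map snd p) (dfa_run delta q (concat_input p)).
Proof.
elim: p S q => [|[s g] p IH] S q Sq Rp //=.
rewrite /concat_input /dfa_run /= foldl_cat.
apply: (IH _ (dfa_run delta q s)).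
  by exists q => //; exists s => //; exact: (Rp (s, g) (mem_head _ _)).
by move=> sg p_sg; apply: Rp; rewrite in_cons p_sg orbT.
Qed.

Lemma psi_star_run_inv (S : Q -> Prop) (y : seq Gamma) q' :
  nfa_run (psi_star delta R) S y q' ->
  exists p : seq (seq Sigma * Gamma),
    [/\ map snd p = y, filter_under R p &
        exists2 q, S q & q' = dfa_run delta q (concat_input p)].
Proof.
elim: y S => [|g y IH] S /=.
  by move=> Sq'; exists [::]; split => //; exists q'.
move=> /IH [p [out_p Rp [q1 [q Sq [s Rsg ->]] ->]]].
exists ((s, g) :: p); split => /=; first by rewrite out_p.
  by move=> sg; rewrite in_cons => /orP [/eqP -> //|]; exact: Rp.
by exists q => //; rewrite /concat_input /dfa_run /= foldl_cat.
Qed.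

End PsiStarRuns.

Theorem theorem3 (Q Sigma Gamma : finType) (delta : Q -> Sigma -> Q) (q0 qerr : Q)
    (R : loss_model Sigma Gamma) :
  finite_state_property delta q0 qerr ->
  superposed_monitor delta q0 R (psi_star delta R) /\
  (forall y : seq Gamma,
      nfa_lang (psi_star delta R) q0 qerr y <-> L_opt delta q0 qerr R y).
Proof.
move=> _.
have monitor : superposed_monitor delta q0 R (psi_star delta R).
  move=> y x /completion_concat [p Rp [<- ->]].
  exact: psi_star_run.
split => // y; split.
- move=> [q /psi_star_run_inv [p [<- Rp [_ -> ->]]] q_ok].
  by exists (concat_input p) => //; exact: concat_completion.
- by move=> [x x_compl x_ok]; exists (dfa_run delta q0 x) => //; exact: monitor.
Qed.
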